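(* For all $n\ge0$, $$r_n=2^n+\sum_{k=1}^{n-1}2^k\,c(n,k),$$ where $c(n,k)$ denotes the number of Young diagrams fitting in the staircase shape $(n,n-1,\dots,1)$ that have exactly $k$ corners $(i,j)$ with $i+j<n+1$.
   Context: The (large) Schröder numbers are defined by $r_0=1$ and $r_n=r_{n-1}+\sum_{i=0}^{n-1}r_ir_{n-1-i}$ for $n\ge1$. Young diagrams are in English notation: the diagram of a partition $\lambda$ is the set of cells $(i,j)$ with $1\le j\le\lambda_i$; it fits in $(n,n-1,\dots,1)$ if $\lambda_i\le n+1-i$ for all $i$. A corner is a cell $(i,j)$ of the diagram such that neither $(i+1,j)$ nor $(i,j+1)$ belongs to the diagram. (For $n=0$ and $n=1$ the sum is empty.) *)

From mathcomp Require Import all_boot.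
Set Implicit Arguments. Unset Strict Implicit. Unset Printing Implicit Defensive.

(* Large Schroeder numbers: r_0 = 1, r_n = r_{n-1} + sum_{i=0}^{n-1} r_i r_{n-1-i}.
   schroeder_seq n = [:: r_0; ...; r_n]. *)
Fixpoint schroeder_seq (n : nat) : seq nat :=
  match n with
  | 0 => [:: 1]
  | m.+1 => let s := schroeder_seq m in
            rcons s (nth 0 s m + \sum_(i < m.+1) nth 0 s i * nth 0 s (m - i))
  end.

Definition schroeder (n : nat) : nat := nth 0 (schroeder_seq n) n.

(* A partition fitting in the staircase (n, n-1, ..., 1) is given by its
   first n parts lam_1 >= ... >= lam_n (all further parts are 0, since
   lam_{n+1} <= 0).  We encode it as f : {ffun 'I_n -> 'I_n.+1}, with
   f i = lam_{i+1}. *)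
Definition fits_staircase (n : nat) (f : {ffun 'I_n -> 'I_n.+1}) : bool :=
  [forall i : 'I_n, forall j : 'I_n, (i <= j) ==> (f j <= f i)] &&
  [forall i : 'I_n, f i <= n - i].

(* lam_i for 1-indexed rows i (0 outside 1..n). *)
Definition part (n : nat) (f : {ffun 'I_n -> 'I_n.+1}) (i : nat) : nat :=
  if i is i'.+1 then (if insub i' is Some k then val (f k) else 0) else 0.

(* Cell (i,j) (1-indexed, English notation) belongs to the diagram. *)
Definition in_diagram n (f : {ffun 'I_n -> 'I_n.+1}) (i j : nat) : bool :=
  [&& 1 <= i, 1 <= j & j <= part f i].

Definition is_corner n (f : {ffun 'I_n -> 'I_n.+1}) (i j : nat) : bool :=
  [&& in_diagram f i j, ~~ in_diagram f i.+1 j & ~~ in_diagram f i j.+1].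

(* Number of corners (i,j) with i + j < n + 1.  All cells of a diagram
   fitting in the staircase have 1 <= i, j <= n. *)
Definition low_corners n (f : {ffun 'I_n -> 'I_n.+1}) : nat :=
  \sum_(i <- iota 1 n) \sum_(j <- iota 1 n) ((is_corner f i j) && (i + j < n + 1)).

Definition c_count (n k : nat) : nat :=
  #|[set f : {ffun 'I_n -> 'I_n.+1} | fits_staircase f && (low_corners f == k)]|.

(* Deleting the first row of a diagram fitting in the staircase of size n+1
   leaves a diagram fitting in the staircase of size n, and the deleted row v
   adds a low corner exactly when it is longer than the next row and v <= n.
   Sorting diagrams by the length of their first row, the sums of
   x ^ (number of low corners) over diagrams whose first row is shorter than k
   therefore satisfy a triangular recurrence.  For x = 2 it is the Schroeder
   triangle a(n+1,k+1) = a(n+1,k) + a(n,k+1) + a(n,k), whose diagonal obeys the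
   Schroeder recurrence by a first-return convolution; for x = 0 the count
   doubles at each step, so exactly 2^n diagrams have no low corner.  Since a
   diagram in the staircase of size n has fewer than n low corners, grouping
   the x = 2 sum by the number of low corners gives the formula. *)

From mathcomp Require Import all_boot zify.
Set Implicit Arguments. Unset Strict Implicit. Unset Printing Implicit Defensive.

Lemma sum_expn_by_value (T : finType) (P : pred T) (w : T -> nat) x m :
    (forall t, P t -> w t < m) ->
  \sum_(t | P t) x ^ w t = \sum_(k < m) x ^ k * #|[set t | P t & w t == k]|.
Proof.
move=> w_lt; transitivity (\sum_(t | P t) \sum_(k < m | k == w t :> nat) x ^ k).
  by apply: eq_bigr => t Pt; rewrite (big_ord1_eq _ (fun k => x ^ k)) w_lt.
rewrite (exchange_big_dep xpredT) //=; apply: eq_bigr => k _.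
rewrite -sum1_card big_distrr; apply: eq_big => [t|t _]; first by rewrite inE eq_sym.
by rewrite /= muln1.
Qed.

Definition is_staircase n (s : seq nat) :=
  [/\ size s = n, forall i j, i <= j -> nth 0 s j <= nth 0 s i & forall i, nth 0 s i <= n - i].

Fixpoint staircases n : seq (seq nat) :=
  if n is n'.+1 then
    [seq v :: s | s <- staircases n', v <- index_iota (head 0 s) n.+1]
  else [:: [::]].

Lemma is_staircase0 s : is_staircase 0 s <-> s = [::].
Proof.
split; first by case=> /size0nil.
by move=> ->; split=> // [i j _|i]; rewrite nth_nil.
Qed.

Lemma is_staircase_cons n v s :
  is_staircase n.+1 (v :: s) <-> is_staircase n s /\ head 0 s <= v <= n.+1.
Proof.
rewrite -nth0; split.
- case=> [[size_s] mono bound]; split; last first.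
    by have := mono 0 1 isT; have := bound 0; rewrite /= subn0 => -> ->.
  split=> // [i j le_ij|i]; first exact: (mono i.+1 j.+1).
  by have := bound i.+1; rewrite subSS.
- case=> [[size_s mono bound] /andP[le_hv le_vn]]; split; first by rewrite /= size_s.
  + case=> [|i] [|j] //= le_ij; last exact: mono.
    exact: leq_trans (mono 0 j isT) le_hv.
  + by case=> [|i] //=; rewrite subSS.
Qed.

Lemma mem_staircases n s : s \in staircases n <-> is_staircase n s.
Proof.
elim: n s => [|n IHn] s.
  by rewrite inE; split=> [/eqP->|/is_staircase0->]; first exact/is_staircase0.
split.
- case/allpairsPdep=> t [v [t_stair v_range ->]].
  by rewrite mem_index_iota in v_range; apply/is_staircase_cons; rewrite -IHn.
- case: s => [|v s]; first by case.
  case/is_staircase_cons=> /IHn s_stair v_range; apply/allpairsPdep.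
  by exists s, v; rewrite mem_index_iota.
Qed.

Lemma uniq_staircases n : uniq (staircases n).
Proof.
elim: n => //= n IHn; apply: allpairs_uniq_dep => // [s _|[t v] [t' v'] _ _ /= [-> ->]] //.
exact: iota_uniq.
Qed.

Lemma head_staircase n s : s \in staircases n -> head 0 s <= n.
Proof. by case/mem_staircases=> _ _ /(_ 0); rewrite subn0 nth0. Qed.

Lemma big_staircasesS n (P : pred (seq nat)) (F : seq nat -> nat) :
  \sum_(s <- staircases n.+1 | P s) F s =
  \sum_(s <- staircases n) \sum_(head 0 s <= v < n.+2 | P (v :: s)) F (v :: s).
Proof.
by rewrite big_mkcond big_allpairs_dep; apply: eq_bigr => s _; rewrite -big_mkcond.
Qed.

(* Row i.+1 has a corner, at column nth 0 s i, iff it is longer than row i.+2;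
   that corner is low iff i.+1 + nth 0 s i < n + 1. *)
Definition low_corners_seq n (s : seq nat) : nat :=
  \sum_(i < n) ((nth 0 s i.+1 < nth 0 s i) && (i + nth 0 s i < n)).

Lemma low_corners_seq_cons n v s :
  low_corners_seq n.+1 (v :: s) = ((head 0 s < v) && (v <= n)) + low_corners_seq n s.
Proof. by rewrite /low_corners_seq big_ord_recl /= nth0. Qed.

Lemma low_corners_seq_le n s : low_corners_seq n.+1 s <= n.
Proof.
rewrite /low_corners_seq big_ord_recr /=.
have -> : (nth 0 s n.+1 < nth 0 s n) && (n + nth 0 s n < n.+1) = false.
  by case: (nth 0 s n) => [|m]; [rewrite ltn0 | rewrite andbC; apply/negbTE; lia].
rewrite addn0 -[n in _ <= n]card_ord -sum1_card.
by apply: leq_sum => i _; apply: leq_b1.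
Qed.

Section CornerGeneratingFunctions.

Variable x : nat.

Definition corner_gf n := \sum_(s <- staircases n) x ^ low_corners_seq n s.

Definition corner_gf_at n v :=
  \sum_(s <- staircases n | head 0 s == v) x ^ low_corners_seq n s.

Definition corner_gf_below n v :=
  \sum_(s <- staircases n | head 0 s < v) x ^ low_corners_seq n s.

Lemma corner_gf_atS n v : v <= n ->
  corner_gf_at n.+1 v = corner_gf_at n v + x * corner_gf_below n v.
Proof.
move=> le_vn; rewrite /corner_gf_at /corner_gf_below big_staircasesS big_distrr.
rewrite [X in _ = X + _]big_mkcond [X in _ = _ + X]big_mkcond -big_split /=.
apply: eq_bigr => s _.
rewrite big_nat1_eq low_corners_seq_cons expnD le_vn ltnS (leq_trans le_vn) // andbT.
by case: ltngtP => //= _; rewrite ?(mul1n, muln1, addn0).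
Qed.

Lemma corner_gf_at_top n : corner_gf_at n.+1 n.+1 = corner_gf n.
Proof.
rewrite /corner_gf_at /corner_gf big_staircasesS; apply: eq_big_seq => s s_stair /=.
by rewrite big_nat1_eq (leqW (head_staircase s_stair)) ltnSn low_corners_seq_cons ltnn andbF.
Qed.

Lemma corner_gf_belowS n v :
  corner_gf_below n v.+1 = corner_gf_below n v + corner_gf_at n v.
Proof.
rewrite /corner_gf_below /corner_gf_at [LHS]big_mkcond.
rewrite [X in _ = X + _]big_mkcond [X in _ = _ + X]big_mkcond -big_split /=.
by apply: eq_bigr => s _; rewrite ltnS leq_eqVlt; case: ltngtP; rewrite ?addn0.
Qed.

Lemma corner_gf_below0 n : corner_gf_below n 0 = 0.
Proof. by rewrite /corner_gf_below big_pred0. Qed.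

Lemma corner_gf_below_top n : corner_gf_below n n.+1 = corner_gf n.
Proof.
rewrite /corner_gf_below /corner_gf -big_filter; congr (\sum_(s <- _) _).
by apply/all_filterP/allP => s /head_staircase.
Qed.

Lemma corner_gf_at0 n : corner_gf_at n 0 = 1.
Proof.
elim: n => [|n IHn].
  by rewrite /corner_gf_at /= big_mkcond big_seq1 /low_corners_seq big_ord0.
by rewrite corner_gf_atS // corner_gf_below0 muln0 addn0.
Qed.

End CornerGeneratingFunctions.

Lemma corner_gf_below0_stable n v :
  v <= n.+1 -> corner_gf_below 0 n.+1 v = corner_gf_below 0 n v.
Proof.
elim: v => [|v IHv] lt_vn; first by rewrite !corner_gf_below0.
rewrite !corner_gf_belowS IHv; last exact: leqW.
by rewrite corner_gf_atS // mul0n addn0.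
Qed.

Lemma corner_gf0 n : corner_gf 0 n = 2 ^ n.
Proof.
elim: n => [|n IHn].
  by rewrite -corner_gf_below_top corner_gf_belowS corner_gf_below0 corner_gf_at0.
rewrite -corner_gf_below_top corner_gf_belowS corner_gf_at_top.
by rewrite corner_gf_below0_stable // corner_gf_below_top IHn expnS mul2n addnn.
Qed.

Lemma size_schroeder_seq n : size (schroeder_seq n) = n.+1.
Proof. by elim: n => //= n IHn; rewrite size_rcons IHn. Qed.

Lemma nth_schroeder_seq n i : i <= n -> nth 0 (schroeder_seq n) i = schroeder i.
Proof.
elim: n => [|n IHn]; first by rewrite leqn0 => /eqP->.
rewrite leq_eqVlt => /predU1P[-> //|lt_in].
by rewrite /= nth_rcons size_schroeder_seq lt_in IHn.
Qed.

Lemma schroederS n :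
  schroeder n.+1 = schroeder n + \sum_(i < n.+1) schroeder i * schroeder (n - i).
Proof.
rewrite /schroeder /= nth_rcons size_schroeder_seq ltnn eqxx nth_schroeder_seq //.
congr (_ + _); apply: eq_bigr => i _.
by rewrite !nth_schroeder_seq ?leq_subr // -ltnS.
Qed.

Section SchroederTriangle.

Variable a : nat -> nat -> nat.
Hypothesis a_n0 : forall n, a n 0 = 1.
Hypothesis a_step : forall n k, k < n -> a n.+1 k.+1 = a n.+1 k + a n k.+1 + a n k.
Hypothesis a_diag : forall n, a n.+1 n.+1 = a n.+1 n + a n n.

Let conv n k := \sum_(j < k.+1) a j j * a (n - j) (k - j).

Lemma conv0 n : conv n 0 = 1.
Proof. by rewrite /conv big_ord1 !a_n0. Qed.

Lemma conv_step n k : k < n -> conv n.+1 k.+1 = conv n.+1 k + conv n k.+1 + conv n k.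
Proof.
move=> lt_kn; rewrite /conv big_ord_recr [\sum_(j < k.+2) _]big_ord_recr /= !subnn !a_n0.
have split_term (j : 'I_k.+1) : a (n.+1 - j) (k.+1 - j) =
    a (n.+1 - j) (k - j) + a (n - j) (k.+1 - j) + a (n - j) (k - j).
  have le_jk : j <= k := ltn_ord j.
  have lt_jn : j < n := leq_ltn_trans le_jk lt_kn.
  rewrite (subSn (ltnW lt_jn)) (subSn le_jk) a_step ?ltn_sub2r //.
under eq_bigr do rewrite split_term !mulnDr.
rewrite !big_split /=; lia.
Qed.

Lemma conv_diag n : conv n.+1 n.+1 = conv n.+1 n + conv n n + a n.+1 n.+1.
Proof.
rewrite /conv big_ord_recr /= subnn a_n0 muln1.
have split_term (j : 'I_n.+1) :
    a (n.+1 - j) (n.+1 - j) = a (n.+1 - j) (n - j) + a (n - j) (n - j).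
  by rewrite (subSn (ltn_ord j : j <= n)) a_diag.
by under eq_bigr do rewrite split_term mulnDr; rewrite big_split.
Qed.

Lemma a_conv n k : k <= n -> a n.+1 k = conv n k.
Proof.
elim: n k => [|n IHn] k; first by rewrite leqn0 => /eqP->; rewrite a_n0 conv0.
elim: k => [|k IHk] le_kn; first by rewrite a_n0 conv0.
rewrite a_step // IHk ?(ltnW le_kn) // (IHn k le_kn).
have [lt_kn|lt_nk|->] := ltngtP k n; first by rewrite (IHn k.+1) // conv_step.
  by have := leq_trans lt_nk le_kn; rewrite ltnn.
by rewrite conv_diag addnAC.
Qed.

Lemma a_diag_schroeder n : a n n = schroeder n.
Proof.
elim/ltn_ind: n => [[_|n IHn]]; first exact: a_n0.
rewrite a_diag a_conv // schroederS IHn // addnC; congr (_ + _).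
by apply: eq_bigr => j _; rewrite !IHn // ltnS ?leq_subr // -ltnS.
Qed.

End SchroederTriangle.

Lemma corner_gf2 n : corner_gf 2 n = schroeder n.
Proof.
rewrite -corner_gf_below_top.
apply: (a_diag_schroeder (a := fun n k => corner_gf_below 2 n k.+1)) => {n} [n|n k lt_kn|n] /=.
- by rewrite corner_gf_belowS corner_gf_below0 corner_gf_at0.
- rewrite corner_gf_belowS corner_gf_atS // [corner_gf_below 2 n k.+2]corner_gf_belowS.
  by lia.
- by rewrite corner_gf_belowS corner_gf_at_top corner_gf_below_top.
Qed.

Section Parts.

Variable n : nat.
Implicit Type f : {ffun 'I_n -> 'I_n.+1}.

Definition parts f : seq nat := [seq val (f i) | i <- enum 'I_n].

Lemma size_parts f : size (parts f) = n.
Proof. by rewrite size_map size_enum_ord. Qed.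

Lemma nth_parts f (i : 'I_n) : nth 0 (parts f) i = f i.
Proof. by rewrite (nth_map i) ?size_enum_ord // nth_ord_enum. Qed.

Lemma nth_parts_default f i : n <= i -> nth 0 (parts f) i = 0.
Proof. by move=> le_ni; rewrite nth_default // size_parts. Qed.

Lemma nth_parts_le f i : nth 0 (parts f) i <= n.
Proof.
have [lt_in|] := ltnP i n; last by move/(nth_parts_default f)->.
by rewrite -[i]/(val (Ordinal lt_in)) nth_parts -ltnS.
Qed.

Lemma partS f i : part f i.+1 = nth 0 (parts f) i.
Proof.
rewrite /part; case: insubP => [k _ <-|]; first by rewrite nth_parts.
by rewrite -leqNgt => /(nth_parts_default f)->.
Qed.

Lemma parts_inj : injective parts.
Proof. by move=> f g eq_fg; apply/ffunP => i; apply: ord_inj; rewrite -!nth_parts eq_fg. Qed.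

Lemma fits_staircaseP f : fits_staircase f <-> is_staircase n (parts f).
Proof.
split.
- case/andP => /forallP mono /forallP bound; split; first exact: size_parts.
  + move=> i j le_ij; have [lt_jn|] := ltnP j n; last by move/(nth_parts_default f)->.
    have lt_in := leq_ltn_trans le_ij lt_jn.
    rewrite -[i]/(val (Ordinal lt_in)) -[j]/(val (Ordinal lt_jn)) !nth_parts.
    by have /forallP/(_ (Ordinal lt_jn)) := mono (Ordinal lt_in); rewrite le_ij.
  + move=> i; have [lt_in|] := ltnP i n; last by move/(nth_parts_default f)->.
    by rewrite -[i]/(val (Ordinal lt_in)) nth_parts; apply: bound.
- case=> _ mono bound; apply/andP; split.
  + apply/forallP => i; apply/forallP => j; apply/implyP => le_ij.
    by have := mono i j le_ij; rewrite !nth_parts.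
  + by apply/forallP => i; have := bound i; rewrite nth_parts.
Qed.

Lemma parts_onto s : is_staircase n s -> exists f, parts f = s.
Proof.
case=> size_s _ bound; exists [ffun i : 'I_n => inord (nth 0 s i)].
apply: (@eq_from_nth _ 0); first by rewrite size_parts size_s.
move=> i; rewrite size_parts => lt_in.
rewrite -[i]/(val (Ordinal lt_in)) nth_parts ffunE inordK //.
by rewrite ltnS (leq_trans (bound i)) ?leq_subr.
Qed.

Lemma big_fits_staircase (F : seq nat -> nat) :
  \sum_(f | fits_staircase f) F (parts f) = \sum_(s <- staircases n) F s.
Proof.
rewrite -big_filter -(big_map parts xpredT).
apply: perm_big; apply: uniq_perm.
- by rewrite map_inj_uniq ?filter_uniq ?index_enum_uniq //; apply: parts_inj.
- exact: uniq_staircases.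
move=> s; apply/idP/idP.
  case/mapP=> f; rewrite mem_filter => /andP[/fits_staircaseP fits_f _] ->.
  exact/mem_staircases.
move/mem_staircases=> stair_s; have [f eq_fs] := parts_onto stair_s.
apply/mapP; exists f => //; rewrite mem_filter mem_index_enum andbT.
by apply/fits_staircaseP; rewrite eq_fs.
Qed.

Lemma low_corners_parts f : low_corners f = low_corners_seq n (parts f).
Proof.
have iota1 : iota 1 n = index_iota 1 n.+1 by rewrite /index_iota subn1.
rewrite /low_corners /low_corners_seq iota1 big_add1 big_mkord.
apply: eq_bigr => i _.
set p := nth 0 (parts f) i; set q := nth 0 (parts f) i.+1.
rewrite (eq_big_nat _ _ (F2 := fun j => if j == p then nat_of_bool ((q < p) && (i + p < n)) else 0)).
  rewrite -big_mkcond big_nat1_eq ltnS nth_parts_le andbT.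
  by case: p => // p; rewrite if_same.
move=> j /andP[j_gt0 _]; rewrite /is_corner /in_diagram !partS -/p -/q j_gt0 /=.
by rewrite addn1 ltnS addSn; case: ltngtP => [_|//|<-] /=; rewrite ?andbF ?andbT //= -ltnNge.
Qed.

End Parts.

Theorem corollary2p10 (n : nat) :
  schroeder n = 2 ^ n + \sum_(1 <= k < n) 2 ^ k * c_count n k.
Proof.
case: n => [|n]; first by rewrite big_geq.
have corner_gf_by_count x : corner_gf x n.+1 = \sum_(k < n.+1) x ^ k * c_count n.+1 k.
  rewrite /corner_gf -big_fits_staircase -(@sum_expn_by_value _ _ _ x n.+1).
    by apply: eq_bigr => f _; rewrite low_corners_parts.
  by move=> f _; rewrite low_corners_parts ltnS low_corners_seq_le.
have count0 : c_count n.+1 0 = 2 ^ n.+1.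
  rewrite -corner_gf0 corner_gf_by_count big_ord_recl big1 => [|k _].
    by rewrite addn0 mul1n.
  by rewrite exp0n.
by rewrite -corner_gf2 corner_gf_by_count big_ord_recl count0 mul1n big_add1 big_mkord.
Qed.
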